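(* Let $1 \le s \le r$ be fixed integers and $n \ge r$. Define $\theta = \binom{n-s}{r-s}\big/\binom{n}{r}$ and $\psi = \dfrac{r^r\, n^{-(s+2)}}{(\max\{r-2s,0\})!}$. Then for any sequence of nonnegative integers $k = k_n$ with $k = O(n^s\log n)$, as $n \to \infty$, \[ (1 - 2\theta + \psi)^k = (1-\theta)^{2k}\left(1 + O\!\left(\frac{\log n}{n^{\min\{2,s\}}}\right)\right). \] *)

From Stdlib Require Export Reals Arith Factorial.
Open Scope R_scope.

(* Real binomial coefficient from Stdlib's Binomial.v:
   C n k = INR (fact n) / (INR (fact k) * INR (fact (n - k))). *)

Definition theta (s r n : nat) : R :=
  C (n - s) (r - s) / C n r.

(* psi = r^r * n^{-(s+2)} / (max(r-2s,0))!
   (nat subtraction r - 2*s is truncated, i.e. equals max(r-2s,0)). *)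
Definition psi (s r n : nat) : R :=
  (INR r ^ r / INR n ^ (s + 2)) / INR (fact (r - 2 * s)).

From Stdlib Require Import Reals Lra Lia.
Open Scope R_scope.

(* Write 1 - 2θ + ψ = (1 - θ)^2 (1 + δ) with δ = (ψ - θ^2) / (1 - θ)^2.  Since
   θ n^s and ψ n^(s+2) are bounded, δ = O(n^-(s + min(2,s))), so for
   k = O(n^s log n) we get k |δ| = O(log n / n^min(2,s)), which tends to 0.  The
   error term is e = (1 + δ)^k - 1, and |e| <= k |δ| exp(k |δ|) <= 3 k |δ| once
   k |δ| <= 1. *)

Lemma pow_1plus_sub1_abs_le (x : R) (k : nat) :
  Rabs ((1 + x) ^ k - 1) <= INR k * Rabs x * (1 + Rabs x) ^ k.
Proof.
  induction k as [|k IH].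
  - simpl. replace (1 - 1) with 0 by ring. rewrite Rabs_R0. lra.
  - replace ((1 + x) ^ S k - 1) with ((1 + x) * ((1 + x) ^ k - 1) + x) by (simpl; ring).
    rewrite S_INR. simpl pow.
    set (a := Rabs x) in *. set (q := (1 + a) ^ k) in *.
    assert (Ha : 0 <= a) by apply Rabs_pos.
    assert (Hq : 1 <= q) by (apply pow_R1_Rle; lra).
    assert (Hk : 0 <= INR k) by apply pos_INR.
    assert (H1 : Rabs (1 + x) <= 1 + a).
    { eapply Rle_trans; [apply Rabs_triang|]. rewrite Rabs_R1. unfold a; lra. }
    assert (H2 : Rabs (1 + x) * Rabs ((1 + x) ^ k - 1) <= (1 + a) * (INR k * a * q))
      by (apply Rmult_le_compat; auto using Rabs_pos).
    eapply Rle_trans; [apply Rabs_triang|]. rewrite Rabs_mult. fold a.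
    assert (0 <= INR k * a * q) by (apply Rmult_le_pos; [apply Rmult_le_pos|]; lra).
    nra.
Qed.

Lemma pow_1plus_le_exp (y : R) (k : nat) : 0 <= y -> (1 + y) ^ k <= exp (INR k * y).
Proof.
  intros Hy. induction k as [|k IH].
  - simpl. rewrite Rmult_0_l, exp_0. lra.
  - replace (INR (S k) * y) with (y + INR k * y) by (rewrite S_INR; ring).
    rewrite exp_plus. simpl pow.
    apply Rmult_le_compat; [lra | apply pow_le; lra | apply exp_ineq1_le | exact IH].
Qed.

Lemma pow_1plus_sub1_abs_le_3 (x : R) (k : nat) :
  INR k * Rabs x <= 1 -> Rabs ((1 + x) ^ k - 1) <= 3 * (INR k * Rabs x).
Proof.
  intros Hy.
  assert (Hexp : (1 + Rabs x) ^ k <= 3).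
  { eapply Rle_trans; [apply pow_1plus_le_exp, Rabs_pos|].
    eapply Rle_trans; [|apply exp_le_3].
    destruct Hy as [Hlt|Heq]; [left; apply exp_increasing; exact Hlt | rewrite Heq; lra]. }
  assert (0 <= INR k * Rabs x) by (apply Rmult_le_pos; [apply pos_INR|apply Rabs_pos]).
  eapply Rle_trans; [apply pow_1plus_sub1_abs_le|]. nra.
Qed.

Lemma fact_mul_pow_le (m s : nat) : (fact m * (m + 1) ^ s <= fact (m + s))%nat.
Proof.
  induction s as [|s IH].
  - rewrite Nat.add_0_r. simpl. lia.
  - replace (m + S s)%nat with (S (m + s)) by lia.
    rewrite fact_simpl. simpl Nat.pow.
    replace (fact m * ((m + 1) * (m + 1) ^ s))%nat
      with ((m + 1) * (fact m * (m + 1) ^ s))%nat by ring.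
    apply Nat.mul_le_mono; [lia | exact IH].
Qed.

Lemma fact_sub_mul_pow_le (n s : nat) :
  (s <= n)%nat -> (fact (n - s) * n ^ s <= s ^ s * fact n)%nat.
Proof.
  intros Hsn. destruct s as [|s]; [rewrite Nat.sub_0_r; simpl; lia|].
  set (m := (n - S s)%nat).
  replace n with (m + S s)%nat by (unfold m; lia).
  replace (m + S s - S s)%nat with m by lia.
  assert (Hp : ((m + S s) ^ S s <= (m + 1) ^ S s * S s ^ S s)%nat).
  { rewrite <- Nat.pow_mul_l. apply Nat.pow_le_mono_l. nia. }
  apply Nat.le_trans with (fact m * (m + 1) ^ S s * S s ^ S s)%nat.
  - rewrite <- Nat.mul_assoc. apply Nat.mul_le_mono_l, Hp.
  - rewrite Nat.mul_comm. apply Nat.mul_le_mono_l, fact_mul_pow_le.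
Qed.

Lemma ln_ge0 (x : R) : 1 <= x -> 0 <= ln x.
Proof.
  intros [Hlt|<-]; [|rewrite ln_1; lra].
  rewrite <- ln_1. left. apply ln_increasing; lra.
Qed.

Lemma ln_le_2sqrt (x : R) : 0 < x -> ln x <= 2 * sqrt x.
Proof.
  intros Hx.
  assert (Hs : 0 < sqrt x) by (apply sqrt_lt_R0; lra).
  rewrite <- (sqrt_sqrt x) at 1 by lra.
  rewrite ln_mult by lra.
  pose proof (exp_ineq1_le (ln (sqrt x))) as He.
  rewrite exp_ln in He by lra. lra.
Qed.

Lemma mul_ln_div_pow_le1 (K x : R) (m : nat) :
  0 <= K -> 1 <= x -> (2 * K) ^ 2 <= x -> (1 <= m)%nat -> K * (ln x / x ^ m) <= 1.
Proof.
  intros HK Hx HKx Hm.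
  pose proof (ln_le_2sqrt x ltac:(lra)).
  pose proof (ln_ge0 x Hx).
  assert (Hsq : 2 * K <= sqrt x).
  { rewrite <- (sqrt_pow2 (2 * K)) by lra. apply sqrt_le_1_alt. lra. }
  pose proof (sqrt_sqrt x ltac:(lra)).
  pose proof (sqrt_pos x).
  assert (HKln : K * ln x <= x) by nra.
  assert (Hxm : x <= x ^ m) by (rewrite <- (pow_1 x) at 1; apply Rle_pow; assumption).
  assert (Hxm0 : 0 < x ^ m) by (apply pow_lt; lra).
  unfold Rdiv. rewrite <- Rmult_assoc.
  apply (Rmult_le_reg_r (x ^ m)); [exact Hxm0|].
  rewrite Rmult_assoc, Rinv_l by lra. lra.
Qed.

Lemma INR_eventually_gt (a : R) : exists N, forall n, (N <= n)%nat -> a < INR n.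
Proof.
  destruct (INR_archimed 1 a) as [N HN]; [lra|].
  exists N. intros n Hn. rewrite Rmult_1_r in HN.
  apply Rlt_le_trans with (INR N); [lra | apply le_INR, Hn].
Qed.

Definition defect (t p : R) : R := (p - t ^ 2) / (1 - t) ^ 2.

Lemma one_sub_2mul_add_factor (t p : R) :
  t <> 1 -> 1 - 2 * t + p = (1 - t) ^ 2 * (1 + defect t p).
Proof. intros Ht. unfold defect. field. lra. Qed.

Lemma defect_abs_le (t p : R) :
  0 <= t <= / 2 -> 0 <= p -> Rabs (defect t p) <= 4 * (p + t ^ 2).
Proof.
  intros Ht Hp.
  assert (Hq : / 4 <= (1 - t) ^ 2) by nra.
  assert (Hd : Rabs (defect t p) * (1 - t) ^ 2 = Rabs (p - t ^ 2)).
  { rewrite <- (Rabs_right ((1 - t) ^ 2)) by nra.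
    rewrite <- Rabs_mult. f_equal. unfold defect. field. lra. }
  assert (Rabs (p - t ^ 2) <= p + t ^ 2) by (apply Rabs_le; nra).
  pose proof (Rabs_pos (defect t p)).
  nra.
Qed.

Definition theta_scale (s r : nat) : R := INR (fact r) * INR s ^ s / INR (fact (r - s)).

Definition defect_scale (s r : nat) : R := 4 * (INR r ^ r + theta_scale s r ^ 2).

Section Coefficients.

Variables s r n : nat.
Hypotheses (Hs : (1 <= s)%nat) (Hsr : (s <= r)%nat) (Hrn : (r <= n)%nat).

Lemma theta_ge0 : 0 <= theta s r n.
Proof.
  unfold theta, C.
  pose proof (INR_fact_lt_0 (n - s)); pose proof (INR_fact_lt_0 (r - s));
  pose proof (INR_fact_lt_0 (n - s - (r - s))); pose proof (INR_fact_lt_0 n);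
  pose proof (INR_fact_lt_0 r); pose proof (INR_fact_lt_0 (n - r)).
  left. repeat apply Rdiv_lt_0_compat; auto; apply Rmult_lt_0_compat; auto.
Qed.

Lemma theta_mul_pow_le : theta s r n * INR n ^ s <= theta_scale s r.
Proof.
  pose proof (INR_fact_lt_0 (r - s)); pose proof (INR_fact_lt_0 n); pose proof (INR_fact_lt_0 r).
  assert (Htheta : theta s r n * INR n ^ s
    = INR (fact (n - s)) * INR n ^ s * INR (fact r) / (INR (fact (r - s)) * INR (fact n))).
  { unfold theta, C. replace (n - s - (r - s))%nat with (n - r)%nat by lia.
    field. repeat split; apply INR_fact_neq_0. }
  assert (Hfact := le_INR _ _ (fact_sub_mul_pow_le n s ltac:(lia))).
  rewrite !mult_INR, !pow_INR in Hfact.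
  rewrite Htheta.
  replace (theta_scale s r)
    with (INR s ^ s * INR (fact n) * INR (fact r) / (INR (fact (r - s)) * INR (fact n)))
    by (unfold theta_scale; field; lra).
  unfold Rdiv. apply Rmult_le_compat_r.
  - left. apply Rinv_0_lt_compat, Rmult_lt_0_compat; assumption.
  - apply Rmult_le_compat_r; lra.
Qed.

Let INR_n_ge1 : 1 <= INR n.
Proof. apply (le_INR 1). lia. Qed.

Lemma theta_le_half : 2 * theta_scale s r < INR n -> theta s r n <= / 2.
Proof.
  intros Hn.
  assert (HX : INR n <= INR n ^ s).
  { rewrite <- (pow_1 (INR n)) at 1. apply Rle_pow; [exact INR_n_ge1 | exact Hs]. }
  pose proof theta_ge0; pose proof theta_mul_pow_le; pose proof INR_n_ge1.
  assert (theta s r n * INR n <= theta s r n * INR n ^ s) by (apply Rmult_le_compat_l; lra).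
  nra.
Qed.

Lemma psi_ge0 : 0 <= psi s r n.
Proof.
  pose proof (INR_fact_lt_0 (r - 2 * s)); pose proof (pos_INR r); pose proof INR_n_ge1.
  unfold psi, Rdiv. repeat apply Rmult_le_pos; try apply pow_le; try lra;
  left; apply Rinv_0_lt_compat; try apply pow_lt; lra.
Qed.

Lemma psi_mul_pow_le : psi s r n * INR n ^ (s + 2) <= INR r ^ r.
Proof.
  assert (HX : 0 < INR n ^ (s + 2)) by (apply pow_lt; pose proof INR_n_ge1; lra).
  assert (Hf : 1 <= INR (fact (r - 2 * s))) by (apply (le_INR 1), lt_O_fact).
  assert (Hr : 0 <= INR r ^ r) by (apply pow_le, pos_INR).
  unfold psi.
  replace (INR r ^ r / INR n ^ (s + 2) / INR (fact (r - 2 * s)) * INR n ^ (s + 2))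
    with (INR r ^ r * / INR (fact (r - 2 * s))) by (field; lra).
  rewrite <- (Rmult_1_r (INR r ^ r)) at 2.
  apply Rmult_le_compat_l; [exact Hr|].
  rewrite <- Rinv_1. apply Rinv_le_contravar; lra.
Qed.

Lemma defect_theta_psi_le : 2 * theta_scale s r < INR n ->
  Rabs (defect (theta s r n) (psi s r n)) * INR n ^ (s + Nat.min 2 s) <= defect_scale s r.
Proof.
  intros Hn.
  set (t := theta s r n); set (p := psi s r n); set (X := INR n).
  assert (HX : 1 <= X) by apply INR_n_ge1.
  assert (Ht0 : 0 <= t) by apply theta_ge0.
  assert (Ht2 : t <= / 2) by exact (theta_le_half Hn).
  assert (Hp0 : 0 <= p) by apply psi_ge0.
  assert (HtX : 0 <= t * X ^ s) by (apply Rmult_le_pos; [|apply pow_le]; lra).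
  assert (Hp : p * X ^ (s + Nat.min 2 s) <= INR r ^ r).
  { eapply Rle_trans; [|apply psi_mul_pow_le].
    apply Rmult_le_compat_l; [exact Hp0 | apply Rle_pow; [lra | lia]]. }
  assert (Ht : t ^ 2 * X ^ (s + Nat.min 2 s) <= theta_scale s r ^ 2).
  { apply Rle_trans with ((t * X ^ s) ^ 2).
    - rewrite Rpow_mult_distr, <- pow_mult.
      apply Rmult_le_compat_l; [apply pow_le; lra | apply Rle_pow; [lra | lia]].
    - apply pow_incr. split; [lra | apply theta_mul_pow_le]. }
  assert (HXsm : 0 <= X ^ (s + Nat.min 2 s)) by (apply pow_le; lra).
  pose proof (defect_abs_le t p (conj Ht0 Ht2) Hp0).
  unfold defect_scale.
  eapply Rle_trans; [apply Rmult_le_compat_r; eassumption|]. nra.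
Qed.

Lemma mul_defect_theta_psi_le (kn : nat) (c : R) :
  0 <= c -> 2 * theta_scale s r < INR n -> INR kn <= c * (INR n ^ s * ln (INR n)) ->
  INR kn * Rabs (defect (theta s r n) (psi s r n))
    <= c * defect_scale s r * (ln (INR n) / INR n ^ Nat.min 2 s).
Proof.
  intros Hc Hn Hk.
  set (d := Rabs (defect (theta s r n) (psi s r n))); set (X := INR n).
  assert (HlnX : 0 <= ln X) by (apply ln_ge0, INR_n_ge1).
  assert (HXm : 0 < X ^ Nat.min 2 s) by (apply pow_lt; pose proof INR_n_ge1; unfold X; lra).
  apply Rle_trans with (c * (X ^ s * ln X) * d).
  { apply Rmult_le_compat_r; [apply Rabs_pos | exact Hk]. }
  replace (c * (X ^ s * ln X) * d) with (c * ln X * (d * X ^ (s + Nat.min 2 s)) / X ^ Nat.min 2 s)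
    by (rewrite pow_add; field; lra).
  replace (c * defect_scale s r * (ln X / X ^ Nat.min 2 s))
    with (c * ln X * defect_scale s r / X ^ Nat.min 2 s) by (field; lra).
  unfold Rdiv. apply Rmult_le_compat_r; [left; apply Rinv_0_lt_compat, HXm|].
  apply Rmult_le_compat_l; [apply Rmult_le_pos; assumption | exact (defect_theta_psi_le Hn)].
Qed.

End Coefficients.

Theorem corollary1 (s r : nat) (k : nat -> nat) :
  (1 <= s)%nat -> (s <= r)%nat ->
  (exists (C0 : R) (N0 : nat), forall n : nat, (N0 <= n)%nat ->
      INR (k n) <= C0 * (INR n ^ s * ln (INR n))) ->
  exists (C1 : R) (N1 : nat), forall n : nat, (N1 <= n)%nat -> (r <= n)%nat ->
    exists e : R,
      Rabs e <= C1 * (ln (INR n) / INR n ^ (Nat.min 2 s)) /\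
      (1 - 2 * theta s r n + psi s r n) ^ (k n)
        = (1 - theta s r n) ^ (2 * k n) * (1 + e).
Proof.
  intros Hs Hsr [C0 [N0 HC0]].
  set (c := Rabs C0 + 1); set (K := c * defect_scale s r).
  assert (Hc : 0 <= c) by (pose proof (Rabs_pos C0); unfold c; lra).
  assert (HK : 0 <= K).
  { apply Rmult_le_pos; [exact Hc|]. unfold defect_scale.
    pose proof (pow_le (INR r) r (pos_INR r)). nra. }
  destruct (INR_eventually_gt (2 * theta_scale s r)) as [N2 HN2].
  destruct (INR_eventually_gt ((2 * K) ^ 2)) as [N3 HN3].
  exists (3 * K), (N0 + N2 + N3)%nat. intros n Hn Hrn.
  assert (HX : 1 <= INR n) by (apply (le_INR 1); lia).
  assert (Htheta : theta s r n <= / 2) by (apply theta_le_half; auto; apply HN2; lia).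
  set (d := defect (theta s r n) (psi s r n)).
  exists ((1 + d) ^ k n - 1). split.
  2: { rewrite (one_sub_2mul_add_factor (theta s r n)) by lra.
       rewrite pow_mult, Rpow_mult_distr. fold d. ring. }
  assert (Hk : INR (k n) <= c * (INR n ^ s * ln (INR n))).
  { eapply Rle_trans; [apply HC0; lia|]. apply Rmult_le_compat_r.
    - apply Rmult_le_pos; [apply pow_le | apply ln_ge0]; lra.
    - pose proof (Rle_abs C0). unfold c. lra. }
  assert (Hkd := mul_defect_theta_psi_le s r n Hs Hsr Hrn (k n) c Hc ltac:(apply HN2; lia) Hk).
  assert (Hsmall : K * (ln (INR n) / INR n ^ Nat.min 2 s) <= 1)
    by (apply mul_ln_div_pow_le1; [exact HK | exact HX | left; apply HN3; lia | lia]).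
  fold d K in Hkd.
  eapply Rle_trans; [apply pow_1plus_sub1_abs_le_3; lra|]. lra.
Qed.
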